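(* If $G$ is any blowup of the Petersen graph, then $\chi(G)\le\lceil\frac54\omega(G)\rceil$.
   Context: A blowup of a graph $H$ is any graph whose vertex set can be partitioned into $|V(H)|$ (not necessarily non-empty) cliques $Q_v$, $v\in V(H)$, such that $Q_u$ is complete to $Q_v$ if $uv\in E(H)$ and there are no edges between $Q_u$ and $Q_v$ if $uv\notin E(H)$. *)

From mathcomp Require Import all_boot.
Set Implicit Arguments. Unset Strict Implicit. Unset Printing Implicit Defensive.

(* A (simple) graph on a finite vertex type T is given by a relation e : rel T;
   we only ever look at e x y for x != y (loops are ignored). *)

Definition colorable (T : finType) (e : rel T) (k : nat) : bool :=
  [exists c : {ffun T -> 'I_k},
     [forall x, forall y, ((x != y) && e x y) ==> (c x != c y)]].

Lemma colorable_exists (T : finType) (e : rel T) : exists k, colorable e k.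
Proof.
exists #|T|; apply/existsP; exists [ffun x => enum_rank x].
apply/forallP => x; apply/forallP => y; apply/implyP => /andP [nxy _].
by rewrite !ffunE; apply: contra nxy => /eqP /enum_rank_inj ->.
Qed.

Definition chromatic_number (T : finType) (e : rel T) : nat :=
  ex_minn (colorable_exists e).

Definition is_clique (T : finType) (e : rel T) (A : {set T}) : bool :=
  [forall x in A, forall y in A, (x != y) ==> e x y].

Definition clique_number (T : finType) (e : rel T) : nat :=
  \max_(A : {set T} | is_clique e A) #|A|.

(* Petersen graph: vertices are the 2-element subsets of {0,..,4},
   two vertices adjacent iff the subsets are disjoint (Kneser graph K(5,2)). *)
Definition petersen_vertex (A : {set 'I_5}) : bool := #|A| == 2.
Definition petersen_adj (A B : {set 'I_5}) : bool := [disjoint A & B].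

(* G (on T, with edge relation e) is a blowup of the Petersen graph:
   there is a map f sending each vertex of G to a Petersen vertex; the fibres
   Q_v = f^-1(v) (possibly empty) are cliques, Q_u is complete to Q_v when
   uv is a Petersen edge, and anticomplete to Q_v otherwise. *)
Definition petersen_blowup (T : finType) (e : rel T) : Prop :=
  exists f : T -> {set 'I_5},
    (forall x, petersen_vertex (f x)) /\
    (forall x y, x != y -> e x y = (f x == f y) || petersen_adj (f x) (f y)).

From mathcomp Require Import all_boot all_fingroup zify.
Set Implicit Arguments. Unset Strict Implicit. Unset Printing Implicit Defensive.

(* Let w v be the size of the fibre over the Petersen vertex v = {i, j} and
   M the clique number, so that w u + w v <= M on every edge.  Colouring the
   blowup amounts to covering each v at least w v times by stable sets of
   the Petersen graph: stars (the pairs through a point) and triangles (the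
   pairs inside a 3-set).  Let {r, a} be a heaviest vertex.  For x outside
   {r, a}, every vertex {x, y} with y outside {r, a} is adjacent to {r, a},
   so the only pair in the star at x that may exceed M is {x, r}, {x, a};
   and this cannot happen at two points x, y, because of the edges
   {x, r}{y, a} and {x, a}{y, r}.  Hence there are two points p, q whose
   stars have all pair sums at most M, with 2 w {p, q} <= M.  For the other
   points k, l, m let g_k be the heaviest weight on the triangle {p, q, k}
   and g the least g_k: g/2 copies of the stars at p and q, g_k - g/2 copies
   of the star at k and enough copies of the triangle {k, l, m} use at most
   M + g/2 <= 5M/4 colours. *)

Lemma chromatic_number_min (T : finType) (e : rel T) (k : nat) :
  colorable e k -> chromatic_number e <= k.
Proof. by rewrite /chromatic_number; case: ex_minnP => m _; apply. Qed.

Section Blowup.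

Variables (T V : finType) (e : rel T) (adj : rel V) (f : T -> V).
Hypothesis blowup : forall x y, x != y -> e x y = (f x == f y) || adj (f x) (f y).

Lemma blowup_fibres_clique u v : symmetric adj -> u != v -> adj u v ->
  #|f @^-1: [set u]| + #|f @^-1: [set v]| <= clique_number e.
Proof.
move=> adj_sym neq_uv adj_uv; rewrite -cardsUI.
have -> : f @^-1: [set u] :&: f @^-1: [set v] = set0.
  apply/setP => x; rewrite !inE; apply/negP => /andP [/eqP -> /eqP uv].
  by rewrite uv eqxx in neq_uv.
rewrite cards0 addn0 /clique_number.
apply: (leq_bigmax_cond (F := fun A : {set T} => #|A|)).
apply/forallP => x; apply/implyP => Qx; apply/forallP => y; apply/implyP => Qy.
apply/implyP => neq_xy; rewrite blowup //.
by move: Qx Qy; rewrite !inE => /orP [] /eqP -> /orP [] /eqP ->;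
  rewrite ?eqxx // ?(adj_sym v) adj_uv orbT.
Qed.

(* Vertex x gets the colour of the (rank of x in its fibre)-th class of L
   containing f x. *)
Lemma blowup_colorable (L : seq {set V}) :
  {in L, forall P : {set V}, {in P &, forall u v, ~~ adj u v}} ->
  (forall x, #|f @^-1: [set f x]| <= count (fun P : {set V} => f x \in P) L) ->
  colorable e (size L).
Proof.
move=> L_stable L_covers.
pose classes v := [seq i <- iota 0 (size L) | v \in nth set0 L i].
have size_classes v : size (classes v) = count (fun P : {set V} => v \in P) L.
  by rewrite size_filter -[in RHS](mkseq_nth set0 L) /mkseq count_map.
pose rank x := index x (enum (f @^-1: [set f x])).
have rank_lt x : rank x < size (classes (f x)).
  rewrite size_classes (leq_trans _ (L_covers x)) // cardE /rank index_mem.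
  by rewrite mem_enum !inE.
pose col x := nth 0 (classes (f x)) (rank x).
have col_class x : col x \in classes (f x) by apply: mem_nth.
have col_lt x : col x < size L.
  by have := col_class x; rewrite mem_filter mem_iota => /andP [_ /andP []].
apply/existsP; exists [ffun x => Ordinal (col_lt x)].
apply/forallP => x; apply/forallP => y; apply/implyP => /andP [neq_xy exy].
rewrite !ffunE; apply: contraL exy => /eqP [col_xy].
rewrite blowup // negb_or; apply/andP; split.
  apply: contra neq_xy => /eqP fxy.
  have uniq_classes : uniq (classes (f x)) by rewrite filter_uniq ?iota_uniq.
  have rank_xy : rank x = rank y.
    apply/eqP; rewrite -(nth_uniq 0 (rank_lt x) _ uniq_classes); last by rewrite fxy rank_lt.
    by rewrite /col in col_xy; rewrite col_xy fxy.
  have fibre_y : y \in enum (f @^-1: [set f x]) by rewrite mem_enum !inE fxy.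
  have fibre_x : x \in enum (f @^-1: [set f x]) by rewrite mem_enum !inE.
  move: rank_xy; rewrite /rank -fxy => index_xy.
  by apply/eqP; rewrite -(nth_index x fibre_x) index_xy nth_index.
have := col_class y; rewrite -col_xy mem_filter => /andP [fyP _].
have := col_class x; rewrite mem_filter => /andP [fxP _].
exact: (L_stable _ (mem_nth set0 (col_lt x))).
Qed.

End Blowup.

(* h = w {p, q}, g_k is the heaviest weight on the triangle {p, q, k} and t_k
   the weight of the vertex {l, m}; s, x_k and y count the stars at p and q,
   the star at k and the triangle {k, l, m}.  The total is at most
   M + (g + 1)/2 where g = min g_k <= M/2. *)
Lemma star_triangle_multiplicities (M h gk gl gm tk tl tm : nat) :
  gk + gl <= M -> gk + gm <= M -> gl + gm <= M ->
  tk + gk <= M -> tl + gl <= M -> tm + gm <= M ->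
  h <= minn gk (minn gl gm) ->
  exists s xk xl xm y,
    [/\ h <= s + s, gk <= s + xk, gl <= s + xl & gm <= s + xm] /\
    [/\ tk <= xl + xm + y, tl <= xk + xm + y, tm <= xk + xl + y
      & s + s + xk + xl + xm + y <= (5 * M + 3) %/ 4].
Proof.
move=> *; pose s := (minn gk (minn gl gm) + 1) %/ 2.
exists s, (gk - s), (gl - s), (gm - s),
  (maxn (tk - (gl - s + (gm - s))) (maxn (tl - (gk - s + (gm - s))) (tm - (gk - s + (gl - s))))).
by rewrite /s; split; split; lia.
Qed.

Local Notation ord5 n := (@Ordinal 5 n isT).

Lemma ord5_ind (P : 'I_5 -> Prop) :
  P (ord5 0) -> P (ord5 1) -> P (ord5 2) -> P (ord5 3) -> P (ord5 4) -> forall i, P i.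
Proof.
by move=> ? ? ? ? ? [[|[|[|[|[|i]]]]] lt_i5] //; rewrite (bool_irrelevance lt_i5 isT).
Qed.

Lemma setC_set2_ord5 (r a : 'I_5) : r != a ->
  exists b c d, [/\ b != c, b != d, c != d & ~: [set r; a] = [set b; c; d]].
Proof.
move=> ra; set C := ~: [set r; a].
have C3 : #|C| = 3 by rewrite cardsCs setCK cards2 ra card_ord.
have [b Cb] : exists b, b \in C by apply/set0Pn; rewrite -card_gt0 C3.
have /cards2P [c [d [cd Cbcd]]] : #|C :\ b| == 2.
  by have := cardsD1 b C; rewrite Cb C3 => ?; apply/eqP; lia.
have : c \in C :\ b by rewrite Cbcd !inE eqxx.
have : d \in C :\ b by rewrite Cbcd !inE eqxx orbT.
rewrite !inE => /andP [db _] /andP [cb _].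
exists b, c, d; split; [by rewrite eq_sym | by rewrite eq_sym | by [] |].
by rewrite -(setD1K Cb) Cbcd setUA.
Qed.

Lemma card_set3_le (T : finType) (a b c : T) : #|[set a; b; c]| <= 3.
Proof.
rewrite (leq_trans (leq_card_setU _ _)) // cards1 addn1 ltnS.
by rewrite (leq_trans (leq_card_setU _ _)) // !cards1.
Qed.

Lemma disjoint_set2 (T : finType) (a b : T) (B : {set T}) :
  [disjoint [set a; b] & B] = (a \notin B) && (b \notin B).
Proof. by rewrite disjoints_subset subUset !sub1set !inE. Qed.

Definition star (r : 'I_5) : {set {set 'I_5}} := [set v : {set 'I_5} | r \in v].

Definition triangle (K : {set 'I_5}) : {set {set 'I_5}} :=
  [set v : {set 'I_5} | (v \subset K) && (#|v| == 2)].

Lemma star_stable r : {in star r &, forall u v, ~~ petersen_adj u v}.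
Proof.
move=> u v; rewrite !inE => ru rv; apply/negP => /disjoint_setI0/setP/(_ r).
by rewrite !inE ru rv.
Qed.

Lemma triangle_stable a b c :
  {in triangle [set a; b; c] &, forall u v, ~~ petersen_adj u v}.
Proof.
move=> u v; rewrite !inE => /andP [uK /eqP u2] /andP [vK /eqP v2].
apply/negP => /disjoint_setI0 uv0.
have : #|u :|: v| <= #|[set a; b; c]| by apply: subset_leq_card; rewrite subUset uK.
by rewrite cardsU uv0 cards0 u2 v2 => /leq_trans/(_ (card_set3_le a b c)).
Qed.

Section PetersenWeights.

Variables (M : nat) (w : {set 'I_5} -> nat).

Definition petersen_cover (L : seq {set {set 'I_5}}) :=
  {in L, forall P : {set {set 'I_5}}, {in P &, forall u v, ~~ petersen_adj u v}} /\
  forall v, petersen_vertex v -> w v <= count (fun P : {set {set 'I_5}} => v \in P) L.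

Definition star_bounded (r : 'I_5) :=
  forall i j : 'I_5, i != j -> i != r -> j != r -> w [set r; i] + w [set r; j] <= M.

Hypothesis w_adj : forall u v, petersen_vertex u -> petersen_vertex v ->
  petersen_adj u v -> w u + w v <= M.

Lemma w_adj_pairs (a b c d : 'I_5) : uniq [:: a; b; c; d] ->
  w [set a; b] + w [set c; d] <= M.
Proof.
rewrite /= !inE !negb_or => /and4P [/and3P [ab ac ad] /andP [bc bd] cd _].
apply: w_adj; rewrite /petersen_vertex ?cards2 ?ab ?cd //.
by rewrite /petersen_adj disjoint_set2 !inE !negb_or ac ad bc bd.
Qed.

Section Heaviest.

Variables (r a : 'I_5).
Hypotheses (ra : r != a) (w_max : forall v, petersen_vertex v -> w v <= w [set r; a]).

Lemma pair_le_heaviest (x y : 'I_5) : x != y -> w [set x; y] <= w [set r; a].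
Proof. by move=> xy; apply: w_max; rewrite /petersen_vertex cards2 xy. Qed.

Lemma pair_off_heaviest (x y : 'I_5) :
  x != y -> x \notin [set r; a] -> y \notin [set r; a] -> w [set x; y] + w [set r; a] <= M.
Proof.
move=> xy; rewrite !inE !negb_or => /andP [xr xa] /andP [yr ya].
by apply: w_adj_pairs; rewrite /= !inE !negb_or xy xr xa yr ya ra.
Qed.

Lemma star_bounded_off_heaviest (x : 'I_5) : x \notin [set r; a] ->
  w [set x; r] + w [set x; a] <= M -> star_bounded x.
Proof.
move=> xra wx i j ij ix jx.
have [ira | ira] := boolP (i \in [set r; a]); last first.
  rewrite (leq_trans _ (pair_off_heaviest _ xra ira)) 1?eq_sym //.
  by rewrite leq_add2l pair_le_heaviest // eq_sym.
have [jra | jra] := boolP (j \in [set r; a]); last first.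
  rewrite addnC (leq_trans _ (pair_off_heaviest _ xra jra)) 1?eq_sym //.
  by rewrite leq_add2l pair_le_heaviest // eq_sym.
move: ira jra ij; rewrite !inE => /orP [] /eqP -> /orP [] /eqP ->;
  by rewrite ?eqxx // addnC.
Qed.

Lemma star_sum_le_either (x y : 'I_5) :
  x != y -> x \notin [set r; a] -> y \notin [set r; a] ->
  (w [set x; r] + w [set x; a] <= M) || (w [set y; r] + w [set y; a] <= M).
Proof.
move=> xy; rewrite !inE !negb_or => /andP [xr xa] /andP [yr ya].
have xr_ya : w [set x; r] + w [set y; a] <= M.
  by apply: w_adj_pairs; rewrite /= !inE !negb_or xr xy xa (eq_sym r) yr ra ya.
have xa_yr : w [set x; a] + w [set y; r] <= M.
  by apply: w_adj_pairs; rewrite /= !inE !negb_or xa xy xr (eq_sym a) ya (eq_sym a) ra yr.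
by case: leqP => //= bad_x; clear -xr_ya xa_yr bad_x; lia.
Qed.

End Heaviest.

Lemma exists_bounded_star_pair :
  exists p q, [/\ p != q, star_bounded p, star_bounded q & 2 * w [set p; q] <= M].
Proof.
have [v0 v0_vtx w_max] : exists2 v0, petersen_vertex v0 &
    forall v, petersen_vertex v -> w v <= w v0.
  case: (@arg_maxnP _ [set ord5 0; ord5 1] petersen_vertex w) => [|v0 ? ?].
    by rewrite /petersen_vertex cards2.
  by exists v0.
have /cards2P [r [a [ra v0E]]] := v0_vtx; rewrite {}v0E in w_max.
have [b [c [d [bc bd cd Cbcd]]]] := setC_set2_ord5 ra.
have [ob oc od] : [/\ b \notin [set r; a], c \notin [set r; a] & d \notin [set r; a]].
  by rewrite -!in_setC Cbcd !inE !eqxx ?orbT.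
pose good (x : 'I_5) := w [set x; r] + w [set x; a] <= M.
have pick (x y : 'I_5) : x != y -> x \notin [set r; a] -> y \notin [set r; a] ->
    good x -> good y ->
    exists p q, [/\ p != q, star_bounded p, star_bounded q & 2 * w [set p; q] <= M].
  move=> xy ox oy gx gy; exists x, y; split => //.
  - exact: (star_bounded_off_heaviest ra w_max ox gx).
  - exact: (star_bounded_off_heaviest ra w_max oy gy).
  rewrite mul2n -addnn (leq_trans _ (pair_off_heaviest ra xy ox oy)) //.
  by rewrite leq_add2l (pair_le_heaviest w_max).
have [gb | bb] := boolP (good b).
  have [gc | bc'] := boolP (good c); first exact: pick b c bc ob oc gb gc.
  have := star_sum_le_either ra cd oc od; rewrite -/(good c) (negbTE bc') /= => gd.
  exact: pick b d bd ob od gb gd.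
have := star_sum_le_either ra bc ob oc; rewrite -/(good b) (negbTE bb) /= => gc.
have := star_sum_le_either ra bd ob od; rewrite -/(good b) (negbTE bb) /= => gd.
exact: pick c d cd oc od gc gd.
Qed.

Local Notation W i j := (w [set ord5 i; ord5 j]).
Local Notation G k := (maxn (W 0 1) (maxn (W 0 k) (W 1 k))).

Lemma bounded_stars01_sums :
  star_bounded (ord5 0) -> star_bounded (ord5 1) -> 2 * W 0 1 <= M ->
  [/\ G 2 + G 3 <= M, G 2 + G 4 <= M & G 3 + G 4 <= M] /\
  [/\ W 3 4 + G 2 <= M, W 2 4 + G 3 <= M & W 2 3 + G 4 <= M].
Proof.
move=> bnd0 bnd1 h01.
have W10 : W 1 0 = W 0 1 by rewrite setUC.
have := bnd0 (ord5 1) (ord5 2) isT isT isT; have := bnd0 (ord5 1) (ord5 3) isT isT isT.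
have := bnd0 (ord5 1) (ord5 4) isT isT isT; have := bnd0 (ord5 2) (ord5 3) isT isT isT.
have := bnd0 (ord5 2) (ord5 4) isT isT isT; have := bnd0 (ord5 3) (ord5 4) isT isT isT.
have := bnd1 (ord5 0) (ord5 2) isT isT isT; have := bnd1 (ord5 0) (ord5 3) isT isT isT.
have := bnd1 (ord5 0) (ord5 4) isT isT isT; have := bnd1 (ord5 2) (ord5 3) isT isT isT.
have := bnd1 (ord5 2) (ord5 4) isT isT isT; have := bnd1 (ord5 3) (ord5 4) isT isT isT.
have := @w_adj_pairs (ord5 0) (ord5 2) (ord5 1) (ord5 3) isT.
have := @w_adj_pairs (ord5 0) (ord5 2) (ord5 1) (ord5 4) isT.
have := @w_adj_pairs (ord5 0) (ord5 3) (ord5 1) (ord5 2) isT.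
have := @w_adj_pairs (ord5 0) (ord5 3) (ord5 1) (ord5 4) isT.
have := @w_adj_pairs (ord5 0) (ord5 4) (ord5 1) (ord5 2) isT.
have := @w_adj_pairs (ord5 0) (ord5 4) (ord5 1) (ord5 3) isT.
have := @w_adj_pairs (ord5 3) (ord5 4) (ord5 0) (ord5 1) isT.
have := @w_adj_pairs (ord5 3) (ord5 4) (ord5 0) (ord5 2) isT.
have := @w_adj_pairs (ord5 3) (ord5 4) (ord5 1) (ord5 2) isT.
have := @w_adj_pairs (ord5 2) (ord5 4) (ord5 0) (ord5 1) isT.
have := @w_adj_pairs (ord5 2) (ord5 4) (ord5 0) (ord5 3) isT.
have := @w_adj_pairs (ord5 2) (ord5 4) (ord5 1) (ord5 3) isT.
have := @w_adj_pairs (ord5 2) (ord5 3) (ord5 0) (ord5 1) isT.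
have := @w_adj_pairs (ord5 2) (ord5 3) (ord5 0) (ord5 4) isT.
have := @w_adj_pairs (ord5 2) (ord5 3) (ord5 1) (ord5 4) isT.
by rewrite W10 => *; split; split; lia.
Qed.

Lemma petersen_cover_of_bounded_stars01 :
  star_bounded (ord5 0) -> star_bounded (ord5 1) -> 2 * W 0 1 <= M ->
  exists L, size L <= (5 * M + 3) %/ 4 /\ petersen_cover L.
Proof.
move=> bnd0 bnd1 h01.
have [[s23 s24 s34] [t2 t3 t4]] := bounded_stars01_sums bnd0 bnd1 h01.
have [s [x2 [x3 [x4 [y [[cov01 cov2 cov3 cov4] [cov34 cov24 cov23 size_le]]]]]]] :=
  star_triangle_multiplicities (h := W 0 1) s23 s24 s34 t2 t3 t4 ltac:(lia).
exists (nseq s (star (ord5 0)) ++ nseq s (star (ord5 1)) ++ nseq x2 (star (ord5 2)) ++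
  nseq x3 (star (ord5 3)) ++ nseq x4 (star (ord5 4)) ++
  nseq y (triangle [set ord5 2; ord5 3; ord5 4])).
split; first by rewrite !size_cat !size_nseq !addnA.
split.
  move=> P; rewrite !mem_cat !mem_nseq; do ![case/orP]; case/andP => _ /eqP ->;
    solve [exact: star_stable | exact: triangle_stable].
move=> v /cards2P [i [j [ij ->]]].
wlog lt_ij : i j ij / i < j.
  move=> cov; case: (ltngtP i j) => [|lt_ji|/val_inj eq_ij]; first exact: cov.
    by rewrite setUC; apply: cov; rewrite // eq_sym.
  by rewrite eq_ij eqxx in ij.
rewrite !count_cat !count_nseq !inE subUset !sub1set !inE cards2 ij.
(* The type {set 'I_5} of v hides a [reverse_coercion] that would make lia
   see [w [set i; j]] and [W i j] as different atoms. *)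
by elim/ord5_ind: i ij lt_ij; elim/ord5_ind: j => //= _ _; rewrite /reverse_coercion; lia.
Qed.

End PetersenWeights.

Lemma perm_pair (T : finType) (x0 x1 y0 y1 : T) : x0 != x1 -> y0 != y1 ->
  exists s : {perm T}, s x0 = y0 /\ s x1 = y1.
Proof.
move=> x01 y01.
have ty1 : tperm x0 y0 y1 != x0.
  by apply: contra y01 => /eqP ty1; rewrite -[y1](tpermK x0 y0) ty1 tpermL.
exists (tperm x1 (tperm x0 y0 y1) * tperm x0 y0)%g; split; rewrite permM.
  by rewrite (tpermD (z := x0)) ?tpermL // eq_sym.
by rewrite tpermL tpermK.
Qed.

Lemma petersen_vertex_imset (s : {perm 'I_5}) (v : {set 'I_5}) :
  petersen_vertex (s @: v) = petersen_vertex v.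
Proof. by rewrite /petersen_vertex card_imset //; apply: perm_inj. Qed.

Lemma petersen_adj_imset (s : {perm 'I_5}) (u v : {set 'I_5}) :
  petersen_adj (s @: u) (s @: v) = petersen_adj u v.
Proof. by rewrite /petersen_adj imset_disjoint //; apply: perm_inj. Qed.

Section Relabel.

Variables (s : {perm 'I_5}) (M : nat) (w : {set 'I_5} -> nat).

Lemma w_adj_relabel :
  (forall u v, petersen_vertex u -> petersen_vertex v -> petersen_adj u v -> w u + w v <= M) ->
  forall u v, petersen_vertex u -> petersen_vertex v -> petersen_adj u v ->
    w (s @: u) + w (s @: v) <= M.
Proof.
move=> w_adj u v u2 v2 uv.
by apply: w_adj; rewrite ?petersen_vertex_imset ?petersen_adj_imset.
Qed.

Lemma star_bounded_relabel (i : 'I_5) :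
  star_bounded M w (s i) -> star_bounded M (fun v => w (s @: v)) i.
Proof.
move=> bnd j k jk ji ki; rewrite !imsetU !imset_set1.
by apply: bnd; rewrite (inj_eq perm_inj).
Qed.

Lemma petersen_cover_relabel (L : seq {set {set 'I_5}}) :
  petersen_cover (fun v => w (s @: v)) L ->
  petersen_cover w [seq [set v : {set 'I_5} | (s^-1)%g @: v \in P] | P : {set {set 'I_5}} <- L].
Proof.
case=> L_stable L_cov; split.
  move=> _ /mapP [P PL ->] u v; rewrite !inE => Pu Pv.
  by rewrite -(petersen_adj_imset s^-1) (L_stable P PL _ _ Pu Pv).
move=> v v2; rewrite count_map.
under eq_count => P do rewrite /preim /= inE.
have := L_cov ((s^-1)%g @: v); rewrite petersen_vertex_imset v2.
by rewrite -imset_comp (eq_imset _ (permKV s)) imset_id => /(_ isT).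
Qed.

End Relabel.

Lemma petersen_weighted_colouring (M : nat) (w : {set 'I_5} -> nat) :
  (forall u v, petersen_vertex u -> petersen_vertex v -> petersen_adj u v -> w u + w v <= M) ->
  exists L, size L <= (5 * M + 3) %/ 4 /\ petersen_cover w L.
Proof.
move=> w_adj; have [p [q [pq bnd_p bnd_q w_pq]]] := exists_bounded_star_pair w_adj.
have [s [s0 s1]] := perm_pair (isT : ord5 0 != ord5 1) pq.
rewrite -s0 in bnd_p; rewrite -s1 in bnd_q.
have [|L [size_L cov]] := petersen_cover_of_bounded_stars01 (w_adj_relabel s w_adj)
  (star_bounded_relabel bnd_p) (star_bounded_relabel bnd_q).
  by rewrite imsetU !imset_set1 s0 s1.
by exists [seq [set v : {set 'I_5} | (s^-1)%g @: v \in P] | P : {set {set 'I_5}} <- L];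
  rewrite size_map; split => //; apply: petersen_cover_relabel.
Qed.

Theorem theorem5p3 (T : finType) (e : rel T)
    (e_irr : irreflexive e) (e_sym : symmetric e)
    (hG : petersen_blowup e) :
  chromatic_number e <= (5 * clique_number e + 3) %/ 4.
Proof.
case: hG => f [f_vtx blowup].
have w_adj u v : petersen_vertex u -> petersen_vertex v -> petersen_adj u v ->
    #|f @^-1: [set u]| + #|f @^-1: [set v]| <= clique_number e.
  move=> /eqP u2 _ uv.
  have neq_uv : u != v.
    by apply: contraTneq uv => <-; rewrite /petersen_adj -setI_eq0 setIid -card_gt0 u2.
  apply: (blowup_fibres_clique blowup) neq_uv uv => ? ?; exact: disjoint_sym.
have [L [size_L [L_stable L_cov]]] := petersen_weighted_colouring w_adj.
apply: leq_trans size_L; apply: chromatic_number_min.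
by apply: (blowup_colorable blowup L_stable) => x; apply: L_cov.
Qed.
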